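(* Let $c>2$ be a real number. Suppose that every separating, union-closed finite collection of sets $\mathcal{A}$ containing at least one non-empty set and satisfying $|\mathcal{A}|\le c\cdot|U(\mathcal{A})|$ has an element of $U(\mathcal{A})$ belonging to at least half of the sets in $\mathcal{A}$. Then for every union-closed finite collection of sets $\mathcal{B}$ containing at least one non-empty set, there exists $x\in U(\mathcal{B})$ with $|x|_{\mathcal{B}}\ge \frac{c-2}{2(c-1)}\cdot|\mathcal{B}|$.
   Context: A collection $\mathcal{A}$ of sets is union-closed if $S,T\in\mathcal{A}$ implies $S\cup T\in\mathcal{A}$. The universe $U(\mathcal{A})$ is $\bigcup_{A\in\mathcal{A}}A$. $\mathcal{A}$ is separating if for any two distinct elements of $U(\mathcal{A})$ there is a set in $\mathcal{A}$ containing one of them but not the other. For an element $x$, $|x|_{\mathcal{B}}$ denotes the number of sets in $\mathcal{B}$ containing $x$. *)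

From mathcomp Require Import all_boot all_order all_algebra.
From mathcomp Require Import reals.
Set Implicit Arguments. Unset Strict Implicit. Unset Printing Implicit Defensive.

Definition union_closed (T : finType) (A : {set {set T}}) : Prop :=
  forall S S' : {set T}, S \in A -> S' \in A -> S :|: S' \in A.

Definition universe (T : finType) (A : {set {set T}}) : {set T} :=
  \bigcup_(S in A) S.

Definition separating (T : finType) (A : {set {set T}}) : Prop :=
  forall x y : T, x \in universe A -> y \in universe A -> x != y ->
    exists2 S, S \in A & (x \in S) != (y \in S).

Definition deg (T : finType) (x : T) (A : {set {set T}}) : nat :=
  #|[set S in A | x \in S]|.

Definition has_nonempty (T : finType) (A : {set {set T}}) : Prop :=
  exists2 S, S \in A & S != set0.

From mathcomp Require Import all_boot all_order all_algebra.
From mathcomp Require Import reals lra.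
Import Order.TTheory GRing.Theory Num.Theory.

Set Implicit Arguments.
Unset Strict Implicit.
Unset Printing Implicit Defensive.

(* Replacing each
   point x by its star (the members of B containing x) identifies the points
   that no member distinguishes, and gives a separating union-closed family
   with the same size and the same degrees.  Then k fresh points p_0, ..., p_k-1
   are added together with the chain of sets U ∪ {p_0, ..., p_i}: the family
   stays union-closed and separating, gains k members and k points, the degree
   of an old point grows by at most k and a new point has degree at most k.
   For k = floor(m / (c - 1)), where m = |B|, the padded family has at most
   c times as many members as points, so some point lies in at least (m + k)/2
   of them.  Since k < m it is an old point x, and
   deg x B >= (m - k)/2 >= (c - 2) m / (2 (c - 1)). *)

Lemma has_nonempty_card_gt0 (T : finType) (A : {set {set T}}) :
  has_nonempty A -> (0 < #|A|)%N.
Proof. by case=> S SA _; apply/card_gt0P; exists S. Qed.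

Lemma has_nonempty_universe_gt0 (T : finType) (A : {set {set T}}) :
  has_nonempty A -> (0 < #|universe A|)%N.
Proof.
case=> S SA /set0Pn[x xS]; apply/card_gt0P; exists x.
by apply/bigcupP; exists S.
Qed.

Section Separation.
Variables (T : finType) (B : {set {set T}}).

Definition star (x : T) : {set {set T}} := [set S in B | x \in S].

Definition separate : {set {set {set {set T}}}} := [set star @: S | S : {set T} in B].

Lemma mem_star_imset x S : S \in B -> (star x \in star @: S) = (x \in S).
Proof.
move=> SB; apply/imsetP/idP => [[y yS /setP/(_ S)]|xS]; last by exists x.
by rewrite !inE SB yS.
Qed.

Lemma star_imset_inj : {in B &, injective (fun S : {set T} => star @: S)}.
Proof.
move=> S S' SB S'B eqSS'; apply/setP=> x.
by rewrite -(mem_star_imset x SB) eqSS' mem_star_imset.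
Qed.

Lemma card_separate : #|separate| = #|B|.
Proof. exact: card_in_imset star_imset_inj. Qed.

Lemma union_closed_separate : union_closed B -> union_closed separate.
Proof.
move=> closedB _ _ /imsetP[S SB ->] /imsetP[S' S'B ->].
by rewrite -imsetU imset_f // closedB.
Qed.

Lemma has_nonempty_separate : has_nonempty B -> has_nonempty separate.
Proof. by case=> S SB nzS; exists (star @: S); rewrite ?imset_f ?imset_eq0. Qed.

Lemma universe_separate : universe separate = star @: universe B.
Proof.
apply/setP=> z; apply/bigcupP/imsetP => [[_ /imsetP[S SB ->] /imsetP[x xS ->]]|].
  by exists x => //; apply/bigcupP; exists S.
by case=> x /bigcupP[S SB xS] ->; exists (star @: S); rewrite ?imset_f.
Qed.

Lemma separating_separate : separating separate.
Proof.
move=> ? ?; rewrite universe_separate => /imsetP[x _ ->] /imsetP[y _ ->] neq_star.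
have [S SB sepS] : exists2 S, S \in B & (x \in S) != (y \in S).
  apply/exists_inP; apply: contraR neq_star => /exists_inPn same.
  apply/eqP/setP=> S; rewrite !inE; case SB: (S \in B) => //=.
  exact/eqP/negbNE/same.
by exists (star @: S); [apply: imset_f | rewrite !mem_star_imset].
Qed.

Lemma deg_star_separate x : deg (star x) separate = deg x B.
Proof.
rewrite /deg -(card_in_imset (f := fun S : {set T} => star @: S)); last first.
  by move=> S S'; rewrite !inE => /andP[SB _] /andP[S'B _]; apply: star_imset_inj.
apply: eq_card => Z; rewrite inE; apply/andP/imsetP.
  by case=> /imsetP[S SB ->]; rewrite mem_star_imset // => xS; exists S; rewrite ?inE ?SB.
by case=> S /[!inE] /andP[SB xS] ->; split; [exact: imset_f | rewrite mem_star_imset].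
Qed.

End Separation.

Section Padding.
Variables (T : finType) (k : nat).
Implicit Types (S : {set T}) (n : nat).

Definition extend (S : {set T}) (n : nat) : {set T + 'I_k} :=
  [set z : T + 'I_k | match z with inl x => x \in S | inr j => (j < n)%N end].

Lemma extendU S S' n n' :
  extend S n :|: extend S' n' = extend (S :|: S') (maxn n n').
Proof. by apply/setP=> -[x|j]; rewrite !inE ?leq_max. Qed.

Lemma extend_inj n : injective (extend ^~ n).
Proof. by move=> S S' /setP eqSS'; apply/setP=> x; have := eqSS' (inl x); rewrite !inE. Qed.

Lemma extend_subset {S S' n n'} :
  S \subset S' -> (n <= n')%N -> extend S n \subset extend S' n'.
Proof.
move=> /subsetP sSS' le_nn'; apply/subsetP=> -[x|j]; rewrite !inE; first exact: sSS'.
by move/leq_trans; apply.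
Qed.

Lemma card_extend S : #|extend S k| = (#|S| + k)%N.
Proof.
rewrite -!sum1_card big_mkcond big_sumType /= [in RHS]big_mkcond.
congr (_ + _); first by apply: eq_bigr => x _; rewrite inE.
by rewrite -[RHS]card_ord -sum1_card; apply: eq_bigr => j _; rewrite inE ltn_ord.
Qed.

Variable B : {set {set T}}.
Let U := universe B.

Definition pad : {set {set T + 'I_k}} :=
  [set extend S 0 | S in B] :|: [set extend U i.+1 | i : 'I_k].

Lemma sub_universe {S} : S \in B -> S \subset U.
Proof. exact: bigcup_sup. Qed.

Lemma universe_pad : universe pad = extend U k.
Proof.
apply/eqP; rewrite eqEsubset; apply/andP; split.
  apply/bigcupsP=> _ /setUP[/imsetP[S SB ->]|/imsetP[i _ ->]].
    exact: extend_subset (sub_universe SB) (leq0n k).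
  exact: extend_subset (subxx U) (ltn_ord i).
apply/subsetP=> -[x /[!inE] /bigcupP[S SB xS]|j _]; apply/bigcupP.
  by exists (extend S 0); rewrite ?inE ?imset_f.
by exists (extend U j.+1); rewrite !inE ?imset_f ?orbT.
Qed.

Lemma card_universe_pad : #|universe pad| = (#|U| + k)%N.
Proof. by rewrite universe_pad card_extend. Qed.

Lemma card_pad : #|pad| = (#|B| + k)%N.
Proof.
have disjoint_parts :
    [set extend S 0 | S in B] :&: [set extend U i.+1 | i : 'I_k] = set0.
  apply/setP=> X; rewrite !inE; apply/negbTE/andP.
  by case=> /imsetP[S _ ->] /imsetP[i _ /setP/(_ (inr i))]; rewrite !inE ltnSn.
have tower_inj : injective (fun i : 'I_k => extend U i.+1).
  move=> i j /setP eqij; apply/val_inj/eqP; rewrite eqn_leq.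
  by have := eqij (inr i); have := eqij (inr j); rewrite !inE !ltnS !leqnn => -> <-.
rewrite /pad cardsU disjoint_parts cards0 subn0.
by rewrite !card_imset ?card_ord //; apply: extend_inj.
Qed.

Lemma extend_in_pad S : S \in B -> extend S 0 \in pad.
Proof. by move=> SB; rewrite inE imset_f. Qed.

Lemma tower_in_pad (i : 'I_k) : extend U i.+1 \in pad.
Proof. by rewrite inE imset_f ?orbT. Qed.

Lemma union_closed_pad : union_closed B -> union_closed pad.
Proof.
have absorb S n : S \in B -> extend S 0 :|: extend U n = extend U n.
  by move=> SB; rewrite extendU max0n; congr extend; apply/setUidPr/sub_universe.
move=> closedB _ _ /setUP[]/imsetP[S SB ->] /setUP[]/imsetP[S' S'B ->].
- by rewrite extendU extend_in_pad ?closedB.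
- by rewrite absorb ?tower_in_pad.
- by rewrite setUC absorb ?tower_in_pad.
rewrite extendU setUid maxnSS.
by case/orP: (leq_total S S') => [/maxn_idPr|/maxn_idPl] ->; apply: tower_in_pad.
Qed.

Lemma has_nonempty_pad : has_nonempty B -> has_nonempty pad.
Proof.
case=> S SB /set0Pn[x xS]; exists (extend S 0); first exact: extend_in_pad.
by apply/set0Pn; exists (inl x); rewrite inE.
Qed.

Lemma separating_pad : separating B -> separating pad.
Proof.
move=> sepB z z'; rewrite universe_pad.
case: z z' => [x|i] [y|j] /[!inE] zU z'U neq.
- have [S SB sepS] := sepB x y zU z'U neq.
  by exists (extend S 0); rewrite ?extend_in_pad ?inE.
- have /bigcupP[S SB xS] := zU.
  by exists (extend S 0); rewrite ?extend_in_pad ?inE ?xS.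
- have /bigcupP[S SB yS] := z'U.
  by exists (extend S 0); rewrite ?extend_in_pad ?inE ?yS.
case: (ltngtP i j) => [lt_ij|lt_ji|/val_inj eq_ij]; last by rewrite eq_ij eqxx in neq.
  by exists (extend U i.+1); rewrite ?tower_in_pad // !inE ltnSn ltnS leqNgt lt_ij.
by exists (extend U j.+1); rewrite ?tower_in_pad // !inE ltnSn ltnS leqNgt lt_ji.
Qed.

Lemma deg_pad_inl x : (deg (inl x) pad <= deg x B + k)%N.
Proof.
have star_sub : [set X in pad | inl x \in X] \subset
    [set extend S 0 | S in [set S in B | x \in S]] :|: [set extend U i.+1 | i : 'I_k].
  apply/subsetP=> X /[!inE] /andP[/orP[/imsetP[S SB ->]|tower]].
    by rewrite inE => xS; rewrite imset_f // inE SB.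
  by rewrite tower orbT.
apply: leq_trans (subset_leq_card star_sub) _; apply: leq_trans (leq_card_setU _ _) _.
apply: leq_add; first exact: leq_imset_card.
by apply: leq_trans (leq_imset_card _ _) _; rewrite card_ord.
Qed.

Lemma deg_pad_inr j : (deg (inr j) pad <= k)%N.
Proof.
have star_sub : [set X in pad | inr j \in X] \subset [set extend U i.+1 | i : 'I_k].
  by apply/subsetP=> X /[!inE] /andP[/orP[/imsetP[S _ ->]|] //]; rewrite inE.
apply: leq_trans (subset_leq_card star_sub) _.
by apply: leq_trans (leq_imset_card _ _) _; rewrite card_ord.
Qed.

End Padding.

Local Open Scope ring_scope.

Lemma truncn_div_bounds (R : archiRealFieldType) (d : R) (m : nat) : 0 < d ->
  (Num.Def.truncn (m%:R / d))%:R * d <= m%:R < (Num.Def.truncn (m%:R / d)).+1%:R * d.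
Proof.
move=> d_gt0; have := truncn_itv (divr_ge0 (ler0n R m) (ltW d_gt0)).
by rewrite ler_pdivlMr // ltr_pdivrMr.
Qed.

Theorem theorem2 (R : realType) (c : R) (hc : 2 < c)
  (H : forall (T : finType) (A : {set {set T}}),
      union_closed A -> separating A -> has_nonempty A ->
      (#|A|%:R <= c * (#|universe A|%:R) :> R) ->
      exists2 x, x \in universe A & (#|A| <= 2 * deg x A)%N) :
  forall (T : finType) (B : {set {set T}}),
    union_closed B -> has_nonempty B ->
    exists2 x, x \in universe B &
      (c - 2) / (2 * (c - 1)) * (#|B|%:R) <= (deg x B)%:R :> R.
Proof.
move=> T B closedB nzB; set m := #|B|.
have m_ge1 : 1 <= m%:R :> R by rewrite ler1n has_nonempty_card_gt0.
have c1_gt1 : 1 < c - 1 by lra.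
have c1_gt0 : 0 < c - 1 by lra.
set k := Num.Def.truncn (m%:R / (c - 1)).
have /andP[k_le k_gt] := truncn_div_bounds m c1_gt0; rewrite -/k in k_le k_gt.
have k_lt_m : (k < m)%N by rewrite -(ltr_nat R); nra.
have universe_ge1 : 1 <= #|universe (separate B)|%:R :> R.
  by rewrite ler1n; apply/has_nonempty_universe_gt0/has_nonempty_separate.
have pad_small : #|pad k (separate B)|%:R <= c * #|universe (pad k (separate B))|%:R :> R.
  by rewrite card_pad card_universe_pad card_separate !natrD -/m; nra.
have [z zU hz] := H _ _ (union_closed_pad (union_closed_separate closedB))
  (separating_pad (separating_separate (B:=B))) (has_nonempty_pad k (has_nonempty_separate nzB))
  pad_small.
rewrite card_pad card_separate -/m in hz.
case: z zU hz => [a|j] + hz; last first.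
  have := leq_trans hz (leq_mul (leqnn 2) (deg_pad_inr (separate B) j)).
  by rewrite mul2n -addnn leq_add2r leqNgt k_lt_m.
rewrite universe_pad inE universe_separate => /imsetP[x xU a_star].
exists x => //.
have := leq_trans hz (leq_mul (leqnn 2) (deg_pad_inl k (separate B) a)).
rewrite a_star deg_star_separate -(ler_nat R) natrM !natrD => ineq.
rewrite mulrAC ler_pdivrMr; nra.
Qed.
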